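(* Let $\mathbf X=(X_1,\dots,X_d)$ be a random vector taking values in $\mathbb N^d$, let $\mathsf A=(a_{ij}) \in [0,1]^{c\times d}$ be a matrix whose columns $\mathbf a_j=(a_{1j},\dots,a_{cj})$ satisfy $|\mathbf a_j|=\sum_{i=1}^c a_{ij} \leq 1$, and let $\mathbf Y = \mathsf A \circ \mathbf X$ be the multinomial re-marking of $\mathbf X$ with parameters $\mathsf A$. Then: 1. $\mathbb E \mathbf Y = \mathsf A\, \mathbb E \mathbf X$; 2. $\mathsf{Disp}(\mathbf Y) = \mathsf A \,\mathsf{Disp}(\mathbf X)\, \mathsf A^\top$; 3. $\Phi_{\mathbf Y}(\mathbf t) = \Phi_{\mathbf X}(\mathsf A^\top \mathbf t)$.
   Context: Multinomial re-marking: given $\mathbf X$, let $\mathbf Z^{(1)},\dots,\mathbf Z^{(d)}$ be conditionally independent given $\mathbf X$ with $\mathbf Z^{(j)}\sim\operatorname{Multi}(X_j,\mathbf a_j)$ (each of the $X_j$ items is independently given new colour $i\in\{1,\dots,c\}$ with probability $a_{ij}$ or discarded with probability $1-|\mathbf a_j|$, and $Z^{(j)}_i$ counts those given colour $i$); then $\mathbf Y=\mathsf A\circ\mathbf X:=\sum_{j=1}^d\mathbf Z^{(j)}$. Dispersion–covariance matrix $\mathsf{Disp}(\mathbf X)$: diagonal entries $\operatorname{Disp}(X_i)=\operatorname{Var}(X_i)-\mathbb E X_i$, off-diagonal entries $\operatorname{Cov}(X_i,X_j)$. Multivariate factorial moment generating function: $\Phi_{\mathbf X}(\mathbf s)=\mathbb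 E\prod_{j}(1+s_j)^{X_j}$. The moments appearing are assumed to exist. *)

From mathcomp Require Import all_boot all_order all_algebra.
From mathcomp Require Import all_classical all_reals all_analysis.
Set Implicit Arguments. Unset Strict Implicit. Unset Printing Implicit Defensive.
Import Order.TTheory GRing.Theory Num.Theory.
Local Open Scope ring_scope.

Definition vecN (n : nat) := {ffun 'I_n -> nat}.

(* Real-valued sum of a (possibly signed) family over a countable/choice type:
   sum of positive parts minus sum of negative parts (meaningful when the
   family is absolutely summable, see [dsummable]). *)
Definition dsum (R : realType) (T : choiceType) (f : T -> R) : R :=
  fine (\esum_(x in [set: T]) (Num.max (f x) 0)%:E)
  - fine (\esum_(x in [set: T]) (Num.max (- f x) 0)%:E).

Definition dsummable (R : realType) (T : choiceType) (f : T -> R) : Prop :=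
  summable [set: T] (fun x => (f x)%:E).

Definition is_pmf (R : realType) (T : choiceType) (p : T -> R) : Prop :=
  (forall x, 0 <= p x) /\ (\esum_(x in [set: T]) (p x)%:E = 1%E).

Definition Ex (R : realType) (T : choiceType) (q : T -> R) (f : T -> R) : R :=
  dsum (fun w => q w * f w).
Definition Ex_exists (R : realType) (T : choiceType) (q : T -> R) (f : T -> R) : Prop :=
  dsummable (fun w => q w * f w).

Definition cov (R : realType) (T : choiceType) (q : T -> R) (U V : T -> R) : R :=
  Ex q (fun w => U w * V w) - Ex q U * Ex q V.

Definition meanvec (R : realType) (T : choiceType) (q : T -> R) (n : nat)
  (U : T -> vecN n) : 'cV[R]_n :=
  \col_i Ex q (fun w => (U w i)%:R).

Definition dispmx (R : realType) (T : choiceType) (q : T -> R) (n : nat)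
  (U : T -> vecN n) : 'M[R]_n :=
  \matrix_(i, k)
    if i == k then cov q (fun w => (U w i)%:R) (fun w => (U w i)%:R)
                   - Ex q (fun w => (U w i)%:R)
    else cov q (fun w => (U w i)%:R) (fun w => (U w k)%:R).

Definition fmgf_integrand (R : realType) (T : choiceType) (n : nat)
  (U : T -> vecN n) (s : 'cV[R]_n) (w : T) : R :=
  \prod_i (1 + s i 0) ^+ (U w i).

Definition fmgf (R : realType) (T : choiceType) (q : T -> R) (n : nat)
  (U : T -> vecN n) (s : 'cV[R]_n) : R :=
  Ex q (fmgf_integrand U s).

(* Multinomial pmf with discard: n items, each independently gets colour i with
   probability a i, or is discarded with probability 1 - sum_i a i;
   z i counts items of colour i. *)
Definition multi_pmf (R : realType) (c : nat) (n : nat) (a : 'I_c -> R)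
  (z : vecN c) : R :=
  let s := (\sum_i z i)%N in
  if (s <= n)%N then
    (n`!)%:R / ((\prod_i ((z i)`!)%:R) * ((n - s)`!)%:R)
    * (\prod_i a i ^+ z i) * (1 - \sum_i a i) ^+ (n - s)
  else 0.

(* Underlying sample space of the re-marking: outcomes (x, (z^(1),...,z^(d)))
   with x in N^d (value of X) and z^(j) in N^c (value of Z^(j)). *)
Definition Omega (c d : nat) := (vecN d * {ffun 'I_d -> vecN c})%type.

(* Joint pmf of (X, Z^(1),...,Z^(d)): X has pmf p, and given X = x the Z^(j)
   are independent with Z^(j) ~ Multi(x_j, a_j). *)
Definition remark_pmf (R : realType) (c d : nat) (p : vecN d -> R)
  (A : 'M[R]_(c, d)) (w : Omega c d) : R :=
  p w.1 * \prod_j multi_pmf (w.1 j) (fun i => A i j) (w.2 j).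

Definition Xof (c d : nat) (w : Omega c d) : vecN d := w.1.

(* Y = A o X = sum_j Z^(j). *)
Definition Yof (c d : nat) (w : Omega c d) : vecN c :=
  [ffun i => (\sum_j w.2 j i)%N].

From mathcomp Require Import all_boot all_order all_algebra.
From mathcomp Require Import all_classical all_reals all_analysis.
From mathcomp Require Import ring lra zify.
Set Implicit Arguments. Unset Strict Implicit.
Import Order.TTheory GRing.Theory Num.Theory.
Local Open Scope ring_scope.

(* Given X = x, the Z^(j) are independent multinomials, so the conditional
   expectation of a product prod_j phi_j(Z^(j)) factorizes into multinomial
   expectations.  The multinomial pmf satisfies a Pascal recursion in the number
   of trials, E_(n+1) g = sum_i a_i E_n g(. + e_i) + (1 - |a|) E_n g, from which
   E Z_i = n a_i, E Z_i Z_k = n (n - 1) a_i a_k + [i = k] n a_i and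
   E prod_i y_i^Z_i = (sum_i a_i y_i + 1 - |a|)^n follow by induction.  Summing
   over j gives E[Y | X], E[Y_i Y_k | X] and E[prod_i (1 + t_i)^Y_i | X] as
   polynomials in X; the tower property (for nonnegative integrands, or under
   absolute summability) and linearity of expectation give the three identities. *)

Section SignedSums.
Variables (R : realType) (T : choiceType).
Implicit Types (f g h : T -> R) (k : R).

Definition esumr f : \bar R := \esum_(x in [set: T]) (f x)%:E.
Arguments esumr f%_ring_scope.

Lemma dsumE f : dsum f = fine (esumr f^\+) - fine (esumr f^\-).
Proof. by []. Qed.

Lemma esumr_ge0 f : (forall x, 0 <= f x) -> (0 <= esumr f)%E.
Proof. by move=> f0; apply: esum_ge0 => x _; rewrite lee_fin. Qed.

Lemma esumr_fin_num f : (forall x, 0 <= f x) -> (esumr f < +oo)%E -> esumr f \is a fin_num.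
Proof. by move=> f0 ffin; rewrite ge0_fin_numE // esumr_ge0. Qed.

Lemma le_esumr f g : (forall x, f x <= g x) -> (esumr f <= esumr g)%E.
Proof. by move=> fg; apply: le_esum => x _; rewrite lee_fin. Qed.

Lemma esumr0 : esumr (fun=> 0) = 0%E.
Proof. exact: esum1. Qed.

Lemma esumrD f g : (forall x, 0 <= f x) -> (forall x, 0 <= g x) ->
  esumr (f \+ g) = (esumr f + esumr g)%E.
Proof. by move=> f0 g0; rewrite /esumr -esumD => [|x _|x _]; rewrite ?lee_fin. Qed.

Lemma esumrZl k f : 0 <= k -> (forall x, 0 <= f x) ->
  esumr (fun x => k * f x) = (k%:E * esumr f)%E.
Proof.
move=> k0 f0; rewrite /esumr /esum -ereal_supZl //; last first.
  by apply/set0P; exists 0%E, set0; [exact: fsets_set0 | rewrite fsbig_set0].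
congr ereal_sup; apply/seteqP; split => y /=.
  move=> [F FF <-]; exists (\sum_(x \in F) (f x)%:E)%E; first by exists F.
  by rewrite ge0_mule_fsumr //; apply: eq_fsbigr => x _; rewrite EFinM.
move=> [_ [F FF <-] <-]; exists F => //.
by rewrite ge0_mule_fsumr //; apply: eq_fsbigr => x _; rewrite EFinM.
Qed.

Lemma dsummableE f : dsummable f = (esumr (Num.norm \o f) < +oo)%E.
Proof. by []. Qed.

Lemma dsummable_funrpos f : dsummable f -> (esumr f^\+ < +oo)%E.
Proof.
rewrite dsummableE -funrposDneg; apply: le_lt_trans; apply: le_esumr => x.
by rewrite lerDl.
Qed.

Lemma dsummable_funrneg f : dsummable f -> (esumr f^\- < +oo)%E.
Proof.
rewrite dsummableE -funrposDneg; apply: le_lt_trans; apply: le_esumr => x.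
by rewrite lerDr.
Qed.

Lemma dsum_ge0 f : (forall x, 0 <= f x) -> dsum f = fine (esumr f).
Proof.
move=> f0; rewrite dsumE.
have -> : f^\+ = f by apply/funext => x; exact/max_idPl.
have -> : f^\- = fun=> 0 by apply/funext => x; apply/max_idPr; rewrite oppr_le0.
by rewrite esumr0 subr0.
Qed.

Lemma dsum_split f g h : (forall x, 0 <= g x) -> (forall x, 0 <= h x) ->
  (esumr g < +oo)%E -> (esumr h < +oo)%E -> (forall x, f x = g x - h x) ->
  dsum f = fine (esumr g) - fine (esumr h).
Proof.
move=> g0 h0 gfin hfin fE.
have fpfin : (esumr f^\+ < +oo)%E.
  apply: le_lt_trans gfin; apply: le_esumr => x.
  by rewrite ge_max g0 fE gerBl h0.
have fnfin : (esumr f^\- < +oo)%E.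
  apply: le_lt_trans hfin; apply: le_esumr => x.
  by rewrite ge_max h0 fE opprB gerBl g0.
have balance : f^\+ \+ h = f^\- \+ g.
  apply/funext => x /=.
  have := congr1 (fun u => u x) (funrposBneg f); rewrite !fctE fE; lra.
move/(congr1 esumr): balance; rewrite !esumrD // => /(congr1 fine).
by rewrite !fineD ?esumr_fin_num // dsumE; lra.
Qed.

Lemma dsummableD f g : dsummable f -> dsummable g -> dsummable (f \+ g).
Proof. exact: summableD. Qed.

Lemma dsummableZ k f : dsummable f -> dsummable (fun x => k * f x).
Proof.
rewrite !dsummableE => ffin.
have -> : Num.norm \o (fun x => k * f x) = fun x => `|k| * `|f x|.
  by apply/funext => x; rewrite /= normrM.
by rewrite esumrZl // lte_mul_pinfty // esumr_fin_num.
Qed.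

Lemma dsumN f : dsum (\- f) = - dsum f.
Proof. by rewrite !dsumE funrposN funrnegN opprB. Qed.

Lemma dsumD f g : dsummable f -> dsummable g -> dsum (f \+ g) = dsum f + dsum g.
Proof.
move=> sf sg; have fp := dsummable_funrpos sf; have fn := dsummable_funrneg sf.
have gp := dsummable_funrpos sg; have gn := dsummable_funrneg sg.
rewrite (@dsum_split _ (f^\+ \+ g^\+) (f^\- \+ g^\-)).
- by rewrite !esumrD // !fineD ?esumr_fin_num // !dsumE; ring.
- by move=> x; rewrite addr_ge0.
- by move=> x; rewrite addr_ge0.
- by rewrite esumrD // lte_add_pinfty.
- by rewrite esumrD // lte_add_pinfty.
- by move=> x /=; have := congr1 (fun u => u x) (funrDB f g); rewrite !fctE; lra.
Qed.

Lemma dsumZ k f : dsummable f -> dsum (fun x => k * f x) = k * dsum f.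
Proof.
wlog k0 : k f / 0 <= k => [nonneg sf|sf].
  have [|kN] := leP 0 k; first by move=> k0; exact: nonneg.
  have -> : (fun x => k * f x) = fun x => - k * (\- f) x.
    by apply/funext => x; rewrite mulrNN.
  rewrite nonneg ?oppr_ge0 ?ltW ?dsumN ?mulrNN //.
  by move: sf; rewrite /dsummable summableN.
have fp := dsummable_funrpos sf; have fn := dsummable_funrneg sf.
rewrite (@dsum_split _ (fun x => k * f^\+ x) (fun x => k * f^\- x)).
- by rewrite !esumrZl // !fineM ?esumr_fin_num //= dsumE; ring.
- by move=> x; rewrite mulr_ge0.
- by move=> x; rewrite mulr_ge0.
- by rewrite esumrZl // lte_mul_pinfty // esumr_fin_num.
- by rewrite esumrZl // lte_mul_pinfty // esumr_fin_num.
- by move=> x; rewrite -mulrBr -[in LHS](funrposBneg f).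
Qed.

Lemma dsummable_sum (I : Type) (r : seq I) (F : I -> T -> R) :
  (forall i, dsummable (F i)) -> dsummable (fun x => \sum_(i <- r) F i x).
Proof.
move=> sF; elim: r => [|i r IH].
  have -> : (fun x => \sum_(i <- [::]) F i x) = fun=> 0 by apply/funext => x; rewrite big_nil.
  by rewrite dsummableE /comp normr0 esumr0.
have -> : (fun x => \sum_(j <- i :: r) F j x) = F i \+ fun x => \sum_(j <- r) F j x.
  by apply/funext => x; rewrite big_cons.
exact: dsummableD.
Qed.

Lemma dsum_sum (I : Type) (r : seq I) (F : I -> T -> R) :
  (forall i, dsummable (F i)) -> dsum (fun x => \sum_(i <- r) F i x) = \sum_(i <- r) dsum (F i).
Proof.
move=> sF; elim: r => [|i r IH].
  have -> : (fun x => \sum_(i <- [::]) F i x) = fun=> 0 by apply/funext => x; rewrite big_nil.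
  by rewrite big_nil dsum_ge0 // esumr0.
have -> : (fun x => \sum_(j <- i :: r) F j x) = F i \+ fun x => \sum_(j <- r) F j x.
  by apply/funext => x; rewrite big_cons.
by rewrite big_cons -IH dsumD //; exact: dsummable_sum.
Qed.

End SignedSums.

Lemma esumr_finType (R : realType) (T : finType) (f : T -> R) :
  (forall t, 0 <= f t) -> esumr f = (\sum_t f t)%:E.
Proof.
move=> f0; rewrite /esumr (esum_fset finite_finset) => [|t _]; last by rewrite lee_fin.
rewrite fsbig_finite ?finite_finset //= -sumEFin -[RHS]big_enum /=; apply: perm_big.
apply: uniq_perm => [||t]; rewrite ?finmap.fset_uniq ?enum_uniq //.
rewrite mem_enum in_fset_set; [exact: mem_set | exact: finite_finset].
Qed.

Lemma sum_delta_mul (R : pzSemiRingType) (I : finType) (F : I -> R) i :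
  \sum_j (i == j)%:R * F j = F i.
Proof.
rewrite (bigD1 i) //= eqxx mul1r big1 ?addr0 // => j /negbTE ji.
by rewrite eq_sym ji mul0r.
Qed.

Lemma mulmx_disp_form (R : comPzRingType) (c d : nat) (A : 'M[R]_(c, d)) (D : 'M[R]_d)
    (m : 'I_d -> R) (S : 'I_d -> 'I_d -> R) i k :
  (forall j l, D j l = S j l - m j * m l - (j == l)%:R * m j) ->
  (A *m D *m A^T) i k =
  \sum_(j < d) A i j * \sum_(l < d) A k l * S j l
  + \sum_(j < d) ((i == k)%:R * A i j - A i j * A k j) * m j
  - (\sum_(j < d) A i j * m j) * (\sum_(j < d) A k j * m j)
  - (i == k)%:R * \sum_(j < d) A i j * m j.
Proof.
move=> DE; rewrite -mulmxA mxE.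
transitivity (\sum_(j < d) (A i j * \sum_(l < d) A k l * S j l
    - A i j * m j * \sum_(l < d) A k l * m l - A i j * A k j * m j)).
  apply: eq_bigr => j _; rewrite mxE !mulr_sumr.
  rewrite -(sum_delta_mul (fun l => A i j * A k l * m j) j) -!sumrB.
  by apply: eq_bigr => l _; rewrite !mxE DE; ring.
under [X in _ = _ + X - _ - _]eq_bigr do rewrite mulrBl -mulrA.
by rewrite !sumrB -mulr_suml -mulr_sumr; ring.
Qed.

Section Expectation.
Variables (R : realType) (T : choiceType) (q : T -> R).
Implicit Types (f g : T -> R).

Lemma ExD f g : Ex_exists q f -> Ex_exists q g -> Ex q (f \+ g) = Ex q f + Ex q g.
Proof.
move=> sf sg; rewrite /Ex -dsumD //; congr dsum.
by apply/funext => w; rewrite /= mulrDr.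
Qed.

Lemma Ex_exists_lincomb (I : Type) (r : seq I) (a : I -> R) (F : I -> T -> R) :
  (forall i, Ex_exists q (F i)) -> Ex_exists q (fun w => \sum_(i <- r) a i * F i w).
Proof.
move=> sF; rewrite /Ex_exists.
have -> : (fun w => q w * \sum_(i <- r) a i * F i w) =
          (fun w => \sum_(i <- r) a i * (q w * F i w)).
  by apply/funext => w; rewrite mulr_sumr; apply: eq_bigr => i _; rewrite mulrCA.
apply: (dsummable_sum r (F := fun i w => a i * (q w * F i w))) => i.
exact: dsummableZ (sF i).
Qed.

Lemma Ex_lincomb (I : Type) (r : seq I) (a : I -> R) (F : I -> T -> R) :
  (forall i, Ex_exists q (F i)) ->
  Ex q (fun w => \sum_(i <- r) a i * F i w) = \sum_(i <- r) a i * Ex q (F i).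
Proof.
move=> sF; rewrite /Ex.
have -> : (fun w => q w * \sum_(i <- r) a i * F i w) =
          (fun w => \sum_(i <- r) a i * (q w * F i w)).
  by apply/funext => w; rewrite mulr_sumr; apply: eq_bigr => i _; rewrite mulrCA.
rewrite (dsum_sum r (F := fun i w => a i * (q w * F i w))) => [|i]; last exact: dsummableZ (sF i).
by apply: eq_bigr => i _; rewrite dsumZ; last exact: sF.
Qed.

Lemma dispmxE n (U : T -> vecN n) i k :
  dispmx q U i k = Ex q (fun w => (U w i)%:R * (U w k)%:R)
    - Ex q (fun w => (U w i)%:R) * Ex q (fun w => (U w k)%:R)
    - (i == k)%:R * Ex q (fun w => (U w i)%:R).
Proof. by rewrite mxE /cov; case: eqP => [<-|_]; rewrite ?mul1r ?mul0r ?subr0. Qed.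

Hypothesis q_ge0 : forall w, 0 <= q w.

Lemma Ex_ge0 f : (forall w, 0 <= f w) -> Ex q f = fine (esumr (fun w => q w * f w)).
Proof. by move=> f0; rewrite /Ex dsum_ge0 // => w; rewrite mulr_ge0. Qed.

Lemma funrpos_Ex f : (fun w => q w * f w)^\+ = fun w => q w * f^\+ w.
Proof. by apply/funext => w; rewrite /funrpos maxr_pMr ?mulr0. Qed.

Lemma funrneg_Ex f : (fun w => q w * f w)^\- = fun w => q w * f^\- w.
Proof. by apply/funext => w; rewrite /funrneg -mulrN maxr_pMr ?mulr0. Qed.

Lemma ExE f : Ex q f = fine (esumr (fun w => q w * f^\+ w)) - fine (esumr (fun w => q w * f^\- w)).
Proof. by rewrite /Ex dsumE funrpos_Ex funrneg_Ex. Qed.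

Lemma Ex_exists_funrpos f : Ex_exists q f -> (esumr (fun w => q w * f^\+ w)%R < +oo)%E.
Proof. by move/dsummable_funrpos; rewrite funrpos_Ex. Qed.

Lemma Ex_exists_funrneg f : Ex_exists q f -> (esumr (fun w => q w * f^\- w)%R < +oo)%E.
Proof. by move/dsummable_funrneg; rewrite funrneg_Ex. Qed.

End Expectation.

Section Multinomial.
Variables (R : realType) (c : nat) (a : 'I_c -> R).
Implicit Types (z : vecN c) (n : nat).

Definition incr_at (i : 'I_c) z : vecN c := [ffun k => (z k + (k == i))%N].
Definition decr_at (i : 'I_c) z : vecN c := [ffun k => (z k - (k == i))%N].
Definition vtotal z : nat := (\sum_(k < c) z k)%N.

Local Notation b := (1 - \sum_(i < c) a i).

Lemma multi_pmfE n z : multi_pmf n a z =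
  if (vtotal z <= n)%N then
    n`!%:R / ((\prod_(k < c) (z k)`!%:R) * (n - vtotal z)`!%:R) * (\prod_(k < c) a k ^+ z k)
    * b ^+ (n - vtotal z)
  else 0.
Proof. by []. Qed.

Lemma leq_vtotal z i : (z i <= vtotal z)%N.
Proof. by rewrite /vtotal (bigD1 i) //= leq_addr. Qed.

Lemma multi_pmf_eq0 n z i : (n < z i)%N -> multi_pmf n a z = 0.
Proof.
move=> lt_n_zi; rewrite multi_pmfE ifF //; apply/negbTE.
by rewrite -ltnNge (leq_trans lt_n_zi) ?leq_vtotal.
Qed.

Lemma incr_atK i z : (0 < z i)%N -> incr_at i (decr_at i z) = z.
Proof.
move=> zi; apply/ffunP => k; rewrite !ffunE.
by case: eqP => [->|_]; rewrite ?subn0 ?addn0 // subn1 addn1 prednK.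
Qed.

Section DecrAt.
Variables (i : 'I_c) (z : vecN c).
Hypothesis zi_gt0 : (0 < z i)%N.

Lemma prod_fact_decr_at :
  (\prod_(k < c) (decr_at i z k)`!%:R) * (z i)%:R = \prod_(k < c) (z k)`!%:R :> R.
Proof.
rewrite (bigD1 i) //= [in RHS](bigD1 i) //= ffunE eqxx subn1.
rewrite (eq_bigr (fun k => (z k)`!%:R)) => [|k /negbTE ki]; last by rewrite ffunE ki subn0.
by rewrite -{3}(prednK zi_gt0) factS natrM prednK //; ring.
Qed.

Lemma prod_exp_decr_at : a i * \prod_(k < c) a k ^+ decr_at i z k = \prod_(k < c) a k ^+ z k.
Proof.
rewrite (bigD1 i) //= [in RHS](bigD1 i) //= ffunE eqxx subn1.
rewrite (eq_bigr (fun k => a k ^+ z k)) => [|k /negbTE ki]; last by rewrite ffunE ki subn0.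
by rewrite -{2}(prednK zi_gt0) exprS mulrA.
Qed.

Lemma vtotal_decr_at : (vtotal (decr_at i z)).+1 = vtotal z.
Proof.
rewrite /vtotal (bigD1 i) //= [in RHS](bigD1 i) //= ffunE eqxx subn1.
rewrite (eq_bigr z) => [|k /negbTE ki]; last by rewrite ffunE ki subn0.
by rewrite -addSn prednK.
Qed.

End DecrAt.

Lemma multi_pmf_decr_at n i z :
  a i * (if (0 < z i)%N then multi_pmf n a (decr_at i z) else 0) =
  (z i)%:R / n.+1%:R * multi_pmf n.+1 a z.
Proof.
have [zi0|zi_gt0] := posnP (z i); first by rewrite zi0 mulr0 !mul0r.
rewrite !multi_pmfE -(vtotal_decr_at zi_gt0) ltnS subSS.
case: ifP => _; last by rewrite !mulr0.
rewrite -(prod_fact_decr_at zi_gt0) -(prod_exp_decr_at zi_gt0) factS natrM.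
have zi_neq0 : (z i)%:R != 0 :> R by rewrite pnatr_eq0 -lt0n.
have fact_neq0 m : m`!%:R != 0 :> R by rewrite pnatr_eq0 -lt0n fact_gt0.
have prod_neq0 : \prod_(k < c) (decr_at i z k)`!%:R != 0 :> R.
  by apply/prodf_neq0 => k _; exact: fact_neq0.
by field; rewrite fact_neq0 zi_neq0 prod_neq0 nat1r pnatr_eq0.
Qed.

Lemma multi_pmf_discard n z :
  b * multi_pmf n a z = (n.+1 - vtotal z)%:R / n.+1%:R * multi_pmf n.+1 a z.
Proof.
have fact_neq0 m : m`!%:R != 0 :> R by rewrite pnatr_eq0 -lt0n fact_gt0.
have prod_neq0 : \prod_(k < c) (z k)`!%:R != 0 :> R.
  by apply/prodf_neq0 => k _; exact: fact_neq0.
have [le_z_n|lt_n_z] := leqP (vtotal z) n; last first.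
  by rewrite multi_pmfE ifN -?ltnNge // (eqP lt_n_z) !mul0r mulr0.
rewrite !multi_pmfE le_z_n (leqW le_z_n) subSn // !factS !natrM exprS.
by field; rewrite prod_neq0 fact_neq0 !nat1r !pnatr_eq0.
Qed.

Lemma multi_pmf_rec n z : multi_pmf n.+1 a z =
  \sum_(i < c) a i * (if (0 < z i)%N then multi_pmf n a (decr_at i z) else 0)
  + b * multi_pmf n a z.
Proof.
under eq_bigr do rewrite multi_pmf_decr_at.
rewrite multi_pmf_discard -big_distrl -mulrDl -mulr_suml -mulrDl -natr_sum -natrD.
have [le_z_n|lt_n_z] := leqP (vtotal z) n.+1.
  by rewrite subnKC // divff ?mul1r // pnatr_eq0.
by rewrite [multi_pmf _ _ _]multi_pmfE ifN ?mulr0 // -ltnNge.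
Qed.

Lemma multi_pmf0 z : multi_pmf 0 a z = (vtotal z == 0%N)%:R.
Proof.
rewrite multi_pmfE leqn0; case: eqP => [z0|_] //.
have zk0 k : z k = 0%N by apply/eqP; rewrite -leqn0 -z0 leq_vtotal.
rewrite z0 subnn fact0 expr0 !big1 => [|k _|k _]; rewrite ?zk0 //.
by rewrite !mulr1 divr1.
Qed.

Hypothesis a_ge0 : forall i, 0 <= a i.
Hypothesis sum_a_le1 : \sum_(i < c) a i <= 1.

Lemma multi_pmf_ge0 n z : 0 <= multi_pmf n a z.
Proof.
rewrite multi_pmfE; case: ifP => // _.
apply: mulr_ge0; last by rewrite exprn_ge0 // subr_ge0.
by rewrite mulr_ge0 ?divr_ge0 ?mulr_ge0 ?prodr_ge0 // => k _; rewrite exprn_ge0.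
Qed.

End Multinomial.

Section MultinomialMoments.
Variables (R : realType) (c : nat) (a : 'I_c -> R) (N : nat).
Implicit Types (n : nat) (g : vecN c -> R).

Local Notation b := (1 - \sum_(i < c) a i).

Definition box_vec (u : {ffun 'I_c -> 'I_N}) : vecN c := [ffun k => val (u k)].

(* [E g(Z)] for [Z ~ Multi(n, a)] as long as [n < N]: the box [[0, N)^c] then
   contains the support, by [multi_pmf_eq0]. *)
Definition multi_exp n g : R :=
  \sum_(u : {ffun 'I_c -> 'I_N}) multi_pmf n a (box_vec u) * g (box_vec u).

Lemma box_vec_inj : injective box_vec.
Proof.
move=> u v /ffunP uv; apply/ffunP => k; apply/val_inj.
by have := uv k; rewrite !ffunE.
Qed.

Definition shift_at (i : 'I_c) (u : {ffun 'I_c -> 'I_N}) : {ffun 'I_c -> 'I_N} :=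
  [ffun k => if k == i then ordS (u k) else u k].

Lemma shift_at_inj i : injective (shift_at i).
Proof.
move=> u v /ffunP uv; apply/ffunP => k; have := uv k; rewrite !ffunE.
by case: eqP => _ //; apply: ordS_inj.
Qed.

(* Reindexing by the cyclic shift [u_i |-> u_i + 1 mod N] of the [i]-th coordinate. *)
Lemma sum_decr_at i (G : vecN c -> R) :
  (forall u : {ffun 'I_c -> 'I_N}, val (u i) = N.-1 -> G (box_vec u) = 0) ->
  \sum_(u : {ffun 'I_c -> 'I_N})
     (if (0 < box_vec u i)%N then G (decr_at i (box_vec u)) else 0)
  = \sum_(u : {ffun 'I_c -> 'I_N}) G (box_vec u).
Proof.
move=> G_top; rewrite (reindex_inj (@shift_at_inj i)); apply: eq_bigr => v _.
have N_gt0 : (0 < N)%N by apply: leq_ltn_trans (ltn_ord (v i)).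
have [vi_top|vi_lt] := eqVneq (val (v i)) N.-1.
  by rewrite G_top // !ffunE eqxx /= vi_top prednK ?modnn.
have vi1_lt : ((v i).+1 < N)%N.
  by have := ltn_ord (v i); move: vi_lt; case: (v i) => m /= _; lia.
rewrite !ffunE eqxx /= modn_small //; congr G; apply/ffunP => k; rewrite !ffunE.
by case: eqP => [->|_] /=; rewrite ?modn_small ?subn1 ?subn0.
Qed.

Lemma multi_exp_rec n g : (n.+1 < N)%N ->
  multi_exp n.+1 g = \sum_(i < c) a i * multi_exp n (fun z => g (incr_at i z)) + b * multi_exp n g.
Proof.
move=> n1_lt_N; rewrite /multi_exp.
under eq_bigr do rewrite multi_pmf_rec mulrDl big_distrl /=.
rewrite big_split /= big_distrr exchange_big /=; congr (_ + _); last first.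
  by apply: eq_bigr => u _; rewrite mulrA.
apply: eq_bigr => i _; rewrite big_distrr /=.
rewrite -(sum_decr_at (i := i) (G := fun z => a i * (multi_pmf n a z * g (incr_at i z)))); last first.
  move=> u ui_top; rewrite (multi_pmf_eq0 a (i := i)) ?mul0r ?mulr0 // ffunE ui_top.
  by rewrite -ltnS prednK // (leq_ltn_trans _ n1_lt_N).
apply: eq_bigr => u _; case: ifP => [ui_gt0|_]; last by rewrite mulr0 mul0r.
by rewrite incr_atK // mulrA.
Qed.

Lemma multi_expD n g h :
  multi_exp n (fun z => g z + h z) = multi_exp n g + multi_exp n h.
Proof. by rewrite /multi_exp -big_split; apply: eq_bigr => u _; rewrite mulrDr. Qed.

Lemma multi_expZ n k g : multi_exp n (fun z => k * g z) = k * multi_exp n g.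
Proof. by rewrite /multi_exp big_distrr; apply: eq_bigr => u _ /=; rewrite mulrCA. Qed.

Lemma multi_exp0 g : (0 < N)%N -> multi_exp 0 g = g [ffun=> 0%N].
Proof.
move=> N_gt0; pose u0 : {ffun 'I_c -> 'I_N} := [ffun=> Ordinal N_gt0].
have box_u0 : box_vec u0 = [ffun=> 0%N] by apply/ffunP => k; rewrite !ffunE.
rewrite /multi_exp (bigD1 u0) //= big1 => [|u u_neq0]; last first.
  rewrite multi_pmf0; case: eqP => [total0|]; last by rewrite mul0r.
  case/eqP: u_neq0; apply: box_vec_inj; rewrite box_u0; apply/ffunP => k.
  by rewrite [RHS]ffunE; apply/eqP; rewrite -leqn0 -total0 leq_vtotal.
rewrite box_u0 multi_pmf0 addr0 /vtotal big1 ?mul1r // => k _.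
by rewrite ffunE.
Qed.

Lemma multi_exp_cst n k : (n < N)%N -> multi_exp n (fun=> k) = k.
Proof.
elim: n => [|n IH] n_lt_N; first exact: multi_exp0.
by rewrite multi_exp_rec // !IH 1?ltnW // -mulr_suml; ring.
Qed.

Lemma multi_exp_coord n i : (n < N)%N -> multi_exp n (fun z => (z i)%:R) = n%:R * a i.
Proof.
elim: n => [|n IH] n_lt_N; first by rewrite multi_exp0 // ffunE mul0r.
have n_lt_N' := ltnW n_lt_N.
have incrE l : (fun z => (incr_at l z i)%:R) = fun z => (z i)%:R + (i == l)%:R :> R.
  by apply/funext => z; rewrite ffunE natrD.
rewrite multi_exp_rec //.
under eq_bigr => l _ do
  rewrite incrE multi_expD multi_exp_cst // IH // mulrDr [a l * _%:R]mulrC.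
rewrite big_split /= sum_delta_mul -mulr_suml IH // -nat1r; ring.
Qed.

Lemma multi_exp_coord2 n i k : (n < N)%N ->
  multi_exp n (fun z => (z i)%:R * (z k)%:R) =
  n%:R * (n%:R - 1) * a i * a k + (i == k)%:R * n%:R * a i.
Proof.
elim: n => [|n IH] n_lt_N; first by rewrite multi_exp0 // !ffunE /=; ring.
have n_lt_N' := ltnW n_lt_N.
have incrE l : (fun z => (incr_at l z i)%:R * (incr_at l z k)%:R) =
    fun z => (z i)%:R * (z k)%:R + ((k == l)%:R * (z i)%:R
             + ((i == l)%:R * (z k)%:R + (i == l)%:R * (k == l)%:R)) :> R.
  by apply/funext => z; rewrite !ffunE !natrD; ring.
rewrite multi_exp_rec //.
under eq_bigr => l _ do rewrite incrE !multi_expD !multi_expZ multi_exp_cst //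
  IH // !multi_exp_coord // !mulrDr ![a l * ((_ == l)%:R * _)]mulrCA.
rewrite !big_split /= !sum_delta_mul -!mulr_suml IH // [k == i]eq_sym -nat1r; ring.
Qed.

Lemma multi_exp_pgf n (y : 'I_c -> R) : (n < N)%N ->
  multi_exp n (fun z => \prod_(i < c) y i ^+ z i) = (\sum_(i < c) a i * y i + b) ^+ n.
Proof.
elim: n => [|n IH] n_lt_N.
  by rewrite multi_exp0 // expr0; apply: big1 => i _; rewrite ffunE expr0.
have n_lt_N' := ltnW n_lt_N.
have incrE l : (fun z => \prod_(i < c) y i ^+ incr_at l z i) =
    fun z => y l * \prod_(i < c) y i ^+ z i.
  apply/funext => z; rewrite (bigD1 l) //= [in RHS](bigD1 l) //= ffunE eqxx addn1 exprS.
  rewrite -mulrA; congr (_ * (_ * _)); apply: eq_bigr => i /negbTE il.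
  by rewrite ffunE il addn0.
rewrite multi_exp_rec //.
under eq_bigr do rewrite incrE multi_expZ IH // mulrA.
by rewrite IH // -mulr_suml -mulrDl exprS mulrC.
Qed.

End MultinomialMoments.

Section ConditionalExpectation.
Variables (R : realType) (c d : nat) (A : 'M[R]_(c, d)).
Implicit Types (x : vecN d) (h : Omega c d -> R).

Definition remark_weight x (z : {ffun 'I_d -> vecN c}) : R :=
  \prod_(j < d) multi_pmf (x j) (fun i => A i j) (z j).

Definition box_size x : nat := (\max_(j < d) x j).+1.

Definition box_family x (u : {ffun 'I_d -> {ffun 'I_c -> 'I_(box_size x)}}) :
  {ffun 'I_d -> vecN c} := [ffun j => box_vec (u j)].

(* [E[h | X = x]], summed over a box containing the support of [Z | X = x]. *)
Definition cond_exp h x : R :=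
  \sum_(u : {ffun 'I_d -> {ffun 'I_c -> 'I_(box_size x)}})
     remark_weight x (box_family u) * h (x, box_family u).

Lemma ltn_box_size x j : (x j < box_size x)%N.
Proof. by rewrite ltnS (leq_bigmax j). Qed.

Lemma box_family_inj x : injective (@box_family x).
Proof.
move=> u v /ffunP uv; apply/ffunP => j; apply: box_vec_inj.
by have := uv j; rewrite !ffunE.
Qed.

Lemma cond_exp_prod (phi : 'I_d -> vecN c -> R) x :
  cond_exp (fun w => \prod_(j < d) phi j (w.2 j)) x =
  \prod_(j < d) multi_exp (fun i => A i j) (box_size x) (x j) (phi j).
Proof.
rewrite /cond_exp /multi_exp bigA_distr_bigA /=; apply: eq_bigr => u _.
by rewrite /remark_weight -big_split /=; apply: eq_bigr => j _; rewrite ffunE.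
Qed.

Lemma cond_expB h1 h2 x :
  cond_exp (fun w => h1 w - h2 w) x = cond_exp h1 x - cond_exp h2 x.
Proof. by rewrite /cond_exp -sumrB; apply: eq_bigr => u _; rewrite mulrBr. Qed.

Lemma cond_expZ (k : vecN d -> R) h x :
  cond_exp (fun w => k w.1 * h w) x = k x * cond_exp h x.
Proof. by rewrite /cond_exp big_distrr; apply: eq_bigr => u _ /=; rewrite mulrCA. Qed.

Lemma cond_exp_sum (I : finType) (F : I -> Omega c d -> R) x :
  cond_exp (fun w => \sum_(m : I) F m w) x = \sum_(m : I) cond_exp (F m) x.
Proof.
rewrite /cond_exp exchange_big; apply: eq_bigr => u _ /=.
by rewrite big_distrr.
Qed.

Lemma cond_exp_X (k : vecN d -> R) x : cond_exp (fun w => k w.1) x = k x.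
Proof.
have -> : (fun w : Omega c d => k w.1) = fun w => k w.1 * \prod_(j < d) (fun _ _ => 1) j (w.2 j).
  by apply/funext => w; rewrite big1_eq mulr1.
rewrite cond_expZ; have /= -> := cond_exp_prod (fun _ _ => 1) x.
by rewrite big1 ?mulr1 // => j _; rewrite multi_exp_cst ?ltn_box_size.
Qed.

Lemma cond_exp_at j (phi : vecN c -> R) x :
  cond_exp (fun w => phi (w.2 j)) x = multi_exp (fun i => A i j) (box_size x) (x j) phi.
Proof.
pose F m := if m == j then phi else fun=> 1.
have prodF (G : 'I_d -> R) : (forall m, m != j -> G m = 1) -> \prod_(m < d) G m = G j.
  by move=> G1; rewrite (bigD1 j) //= big1 ?mulr1.
have -> : (fun w : Omega c d => phi (w.2 j)) = fun w => \prod_(m < d) F m (w.2 m).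
  by apply/funext => w; rewrite (prodF (fun m => F m (w.2 m))) /F ?eqxx // => m /negbTE ->.
rewrite cond_exp_prod (prodF (fun m => multi_exp _ _ (x m) (F m))) /F ?eqxx // => m /negbTE ->.
by rewrite multi_exp_cst ?ltn_box_size.
Qed.

Lemma cond_exp_at2 j l (phi psi : vecN c -> R) x : j != l ->
  cond_exp (fun w => phi (w.2 j) * psi (w.2 l)) x =
  multi_exp (fun i => A i j) (box_size x) (x j) phi *
  multi_exp (fun i => A i l) (box_size x) (x l) psi.
Proof.
move=> jl; pose F m := if m == j then phi else if m == l then psi else fun=> 1.
have Fj : F j = phi by rewrite /F eqxx.
have Fl : F l = psi by rewrite /F eq_sym (negbTE jl) eqxx.
have prodF (G : 'I_d -> R) : (forall m, m != j -> m != l -> G m = 1) ->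
    \prod_(m < d) G m = G j * G l.
  move=> G1; rewrite (bigD1 j) //= (bigD1 l) 1?eq_sym //= big1 ?mulr1 // => m /andP[ml mj].
  exact: G1.
have -> : (fun w : Omega c d => phi (w.2 j) * psi (w.2 l)) =
          fun w => \prod_(m < d) F m (w.2 m).
  apply/funext => w; rewrite (prodF (fun m => F m (w.2 m))) ?Fj ?Fl // => m mj ml.
  by rewrite /F (negbTE mj) (negbTE ml).
rewrite cond_exp_prod (prodF (fun m => multi_exp _ _ (x m) (F m))) ?Fj ?Fl // => m mj ml.
by rewrite /F (negbTE mj) (negbTE ml) multi_exp_cst ?ltn_box_size.
Qed.

Hypothesis A_ge0 : forall i j, 0 <= A i j.
Hypothesis A_col_le1 : forall j, \sum_(i < c) A i j <= 1.

Lemma remark_weight_ge0 x z : 0 <= remark_weight x z.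
Proof. by apply: prodr_ge0 => j _; apply: multi_pmf_ge0. Qed.

Lemma cond_exp_ge0 h x : (forall w, 0 <= h w) -> 0 <= cond_exp h x.
Proof. by move=> h0; apply: sumr_ge0 => u _; rewrite mulr_ge0 ?remark_weight_ge0. Qed.

(* Outside the box the weight vanishes, since [Z^(j)_i <= X_j]. *)
Lemma esumr_remark_weight h x : (forall w, 0 <= h w) ->
  esumr (fun z => remark_weight x z * h (x, z)) = (cond_exp h x)%:E.
Proof.
move=> h0; have Wh0 z : 0 <= remark_weight x z * h (x, z).
  by rewrite mulr_ge0 ?remark_weight_ge0.
rewrite /esumr (esumID (range (@box_family x))) => [|z _]; last by rewrite lee_fin.
rewrite [X in (_ + X)%E]esum1 ?adde0 => [|z [_ /= out_of_box]]; last first.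
  have [in_box|] := boolP [forall j, forall i, (z j i < box_size x)%N].
    case: out_of_box; exists [ffun j => [ffun i => Ordinal (forallP (forallP in_box j) i)]] => //.
    by apply/ffunP => j; rewrite !ffunE; apply/ffunP => i; rewrite !ffunE.
  rewrite negb_forall => /existsP[j]; rewrite negb_forall => /existsP[i].
  rewrite -leqNgt => /(leq_trans (ltn_box_size x j)) lt_xj_zji.
  by rewrite /remark_weight (bigD1 j) //= (multi_pmf_eq0 _ lt_xj_zji) !mul0r.
rewrite setTI esum_image => [|u v _ _]; last exact: box_family_inj.
by rewrite -/(esumr _) esumr_finType.
Qed.

Lemma esumr_remark (p : vecN d -> R) h : (forall x, 0 <= p x) -> (forall w, 0 <= h w) ->
  esumr (fun w => remark_pmf p A w * h w) = esumr (fun x => p x * cond_exp h x).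
Proof.
move=> p0 h0; have ge0 w : 0 <= remark_pmf p A w * h w.
  by rewrite !mulr_ge0 ?remark_weight_ge0.
transitivity (\esum_(x in [set: vecN d]) esumr (fun z => p x * (remark_weight x z * h (x, z)))).
  rewrite /esumr esum_esum => [|x z _ _]; last by rewrite lee_fin mulrA; exact: ge0 (x, z).
  have -> : ([set: vecN d] `*`` fun=> [set: {ffun 'I_d -> vecN c}])%classic = setT.
    by apply/seteqP; split.
  by apply: eq_esum => -[x z] _; rewrite mulrA.
apply: eq_esum => x _; rewrite esumrZl // => [|z]; last by rewrite mulr_ge0 ?remark_weight_ge0.
by rewrite esumr_remark_weight.
Qed.

End ConditionalExpectation.

Section RemarkedMoments.
Variables (R : realType) (c d : nat) (A : 'M[R]_(c, d)).
Implicit Types (x : vecN d) (i k : 'I_c).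

Lemma cond_exp_Y i x : cond_exp A (fun w => (Yof w i)%:R) x = \sum_(j < d) A i j * (x j)%:R.
Proof.
have -> : (fun w : Omega c d => (Yof w i)%:R) = fun w => \sum_(j < d) (w.2 j i)%:R :> R.
  by apply/funext => w; rewrite ffunE natr_sum.
rewrite cond_exp_sum; apply: eq_bigr => j _.
by rewrite (cond_exp_at _ _ (fun z => (z i)%:R)) multi_exp_coord ?ltn_box_size // mulrC.
Qed.

Lemma cond_exp_ZZ j l i k x :
  cond_exp A (fun w => (w.2 j i)%:R * (w.2 l k)%:R) x =
  A i j * A k l * ((x j)%:R * (x l)%:R)
  + (j == l)%:R * (((i == k)%:R * A i j - A i j * A k j) * (x j)%:R).
Proof.
have [<-|jl] := eqVneq j l.
  rewrite (cond_exp_at _ _ (fun z => (z i)%:R * (z k)%:R)) multi_exp_coord2 ?ltn_box_size //.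
  by rewrite mul1r; ring.
rewrite (cond_exp_at2 _ (fun z => (z i)%:R) (fun z => (z k)%:R)) //.
by rewrite !multi_exp_coord ?ltn_box_size // mul0r addr0; ring.
Qed.

Lemma cond_exp_YY i k x :
  cond_exp A (fun w => (Yof w i)%:R * (Yof w k)%:R) x =
  \sum_(j < d) A i j * \sum_(l < d) A k l * ((x j)%:R * (x l)%:R)
  + \sum_(j < d) ((i == k)%:R * A i j - A i j * A k j) * (x j)%:R.
Proof.
have -> : (fun w : Omega c d => (Yof w i)%:R * (Yof w k)%:R) =
          fun w => \sum_(j < d) \sum_(l < d) (w.2 j i)%:R * (w.2 l k)%:R :> R.
  apply/funext => w; rewrite !ffunE !natr_sum mulr_suml.
  by apply: eq_bigr => j _; rewrite mulr_sumr.
rewrite cond_exp_sum -big_split; apply: eq_bigr => j _ /=.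
rewrite cond_exp_sum mulr_sumr.
under eq_bigr do rewrite cond_exp_ZZ.
rewrite big_split /= sum_delta_mul; congr (_ + _).
by apply: eq_bigr => l _; rewrite -mulrA.
Qed.

Lemma cond_exp_fmgf (t : 'cV[R]_c) x :
  cond_exp A (fmgf_integrand (@Yof c d) t) x = \prod_(j < d) (1 + (A^T *m t) j 0) ^+ x j.
Proof.
pose phi (j : 'I_d) (z : vecN c) := \prod_(i < c) (1 + t i 0) ^+ z i.
have -> : fmgf_integrand (@Yof c d) t = fun w => \prod_(j < d) phi j (w.2 j).
  apply/funext => w; rewrite /fmgf_integrand exchange_big /=; apply: eq_bigr => i _.
  by rewrite ffunE expr_sum.
rewrite cond_exp_prod; apply: eq_bigr => j _.
rewrite multi_exp_pgf ?ltn_box_size // mxE; congr (_ ^+ _).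
under eq_bigr do rewrite mulrDr mulr1.
under [in RHS]eq_bigr do rewrite mxE.
by rewrite big_split /=; ring.
Qed.

End RemarkedMoments.

Section Remarking.
Variables (R : realType) (c d : nat) (p : vecN d -> R) (A : 'M[R]_(c, d)).
Hypothesis p_ge0 : forall x, 0 <= p x.
Hypothesis A_ge0 : forall i j, 0 <= A i j.
Hypothesis A_col_le1 : forall j, \sum_(i < c) A i j <= 1.

Local Notation q := (remark_pmf p A).
Let esumr_q h := esumr_remark A_ge0 A_col_le1 (h := h) p_ge0.
Let cond_exp_nonneg h x := cond_exp_ge0 A_ge0 A_col_le1 (h := h) x.

Lemma remark_pmf_ge0 w : 0 <= q w.
Proof. by rewrite mulr_ge0 ?remark_weight_ge0. Qed.

Lemma Ex_tower_ge0 f g : (forall w, 0 <= f w) -> cond_exp A f =1 g -> Ex q f = Ex p g.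
Proof.
move=> f0 /funext <-; rewrite (Ex_ge0 remark_pmf_ge0) // esumr_q // Ex_ge0 // => x.
exact: cond_exp_nonneg.
Qed.

Lemma Ex_tower f g : cond_exp A f =1 g -> Ex_exists q f -> Ex q f = Ex p g.
Proof.
move=> /funext <- sf; have pos := Ex_exists_funrpos remark_pmf_ge0 sf.
have neg := Ex_exists_funrneg remark_pmf_ge0 sf.
rewrite esumr_q // in pos; rewrite esumr_q // in neg.
rewrite (ExE remark_pmf_ge0) !esumr_q // /Ex (dsum_split _ _ pos neg) // => x.
- by rewrite mulr_ge0 ?cond_exp_nonneg.
- by rewrite mulr_ge0 ?cond_exp_nonneg.
rewrite -mulrBr -cond_expB; congr (_ * cond_exp _ _ _).
by apply/funext => w; have := congr1 (fun u => u w) (funrposBneg f); rewrite !fctE.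
Qed.

Lemma Ex_Xof g : Ex q (fun w => g (Xof w)) = Ex p g.
Proof.
rewrite (ExE remark_pmf_ge0) (ExE p_ge0) !esumr_q //.
by rewrite (funext (cond_exp_X A g^\+)) (funext (cond_exp_X A g^\-)).
Qed.

Lemma Ex_exists_Xof g : Ex_exists q (fun w => g (Xof w)) -> Ex_exists p g.
Proof.
rewrite /Ex_exists !dsummableE.
have -> : Num.norm \o (fun w => q w * g (Xof w)) = fun w => q w * `|g (Xof w)|.
  by apply/funext => w; rewrite /= normrM ger0_norm ?remark_pmf_ge0.
have -> : Num.norm \o (fun x => p x * g x) = fun x => p x * `|g x|.
  by apply/funext => x; rewrite /= normrM ger0_norm.
by rewrite esumr_q // (funext (cond_exp_X A (fun x => `|g x|))).
Qed.

Section Moments.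
Hypothesis X_summable : forall j, Ex_exists q (fun w => (Xof w j)%:R).

Let x_summable j : Ex_exists p (fun x => (x j)%:R).
Proof. exact: Ex_exists_Xof (X_summable j). Qed.

Lemma Ex_Y i : Ex q (fun w => (Yof w i)%:R) = \sum_(j < d) A i j * Ex q (fun w => (Xof w j)%:R).
Proof.
rewrite (Ex_tower_ge0 _ (cond_exp_Y A i)) // Ex_lincomb //.
by apply: eq_bigr => j _; rewrite (Ex_Xof (fun x => (x j)%:R)).
Qed.

Hypothesis XX_summable :
  forall j l, Ex_exists q (fun w => (Xof w j)%:R * (Xof w l)%:R).

Lemma Ex_YY i k : Ex q (fun w => (Yof w i)%:R * (Yof w k)%:R) =
  \sum_(j < d) A i j * \sum_(l < d) A k l * Ex q (fun w => (Xof w j)%:R * (Xof w l)%:R)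
  + \sum_(j < d) ((i == k)%:R * A i j - A i j * A k j) * Ex q (fun w => (Xof w j)%:R).
Proof.
have xx_summable j l : Ex_exists p (fun x => (x j)%:R * (x l)%:R).
  exact: Ex_exists_Xof (XX_summable j l).
rewrite (Ex_tower_ge0 _ (cond_exp_YY A i k)) => [|w]; last by rewrite mulr_ge0.
have inner_summable j :
    Ex_exists p (fun x => \sum_(l < d) A k l * ((x j)%:R * (x l)%:R)).
  exact: Ex_exists_lincomb.
rewrite ExD; [|exact: Ex_exists_lincomb..].
rewrite !Ex_lincomb //.
congr (_ + _); apply: eq_bigr => j _; last by rewrite (Ex_Xof (fun x => (x j)%:R)).
rewrite Ex_lincomb //; congr (_ * _); apply: eq_bigr => l _.
by rewrite (Ex_Xof (fun x => (x j)%:R * (x l)%:R)).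
Qed.

End Moments.

Lemma remark_mean : (forall j, Ex_exists q (fun w => (Xof w j)%:R)) ->
  meanvec q (@Yof c d) = A *m meanvec q (@Xof c d).
Proof.
move=> X_summable; apply/matrixP => i ?.
by rewrite !mxE Ex_Y //; apply: eq_bigr => j _; rewrite mxE.
Qed.

Lemma remark_disp : (forall j, Ex_exists q (fun w => (Xof w j)%:R)) ->
  (forall j l, Ex_exists q (fun w => (Xof w j)%:R * (Xof w l)%:R)) ->
  dispmx q (@Yof c d) = A *m dispmx q (@Xof c d) *m A^T.
Proof.
move=> X_summable XX_summable; apply/matrixP => i k.
by rewrite dispmxE Ex_YY // !Ex_Y // (mulmx_disp_form _ _ _ (dispmxE q (@Xof c d))).
Qed.

Lemma remark_fmgf (t : 'cV[R]_c) : Ex_exists q (fmgf_integrand (@Yof c d) t) ->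
  fmgf q (@Yof c d) t = fmgf q (@Xof c d) (A^T *m t).
Proof.
move=> Y_summable; rewrite /fmgf (Ex_tower (cond_exp_fmgf A t)) //.
by rewrite (Ex_Xof (fun x => \prod_(j < d) (1 + (A^T *m t) j 0) ^+ x j)).
Qed.

End Remarking.

Unset Implicit Arguments.

Theorem theorem3 (R : realType) (c d : nat) (p : vecN d -> R)
  (A : 'M[R]_(c, d)) :
  is_pmf p ->
  (forall i j, 0 <= A i j <= 1) ->
  (forall j, \sum_i A i j <= 1) ->
  let q := remark_pmf p A in
  (* 1. E Y = A E X *)
  ((forall j, Ex_exists q (fun w => ((@Xof c d w) j)%:R)) ->
     meanvec q (@Yof c d) = A *m meanvec q (@Xof c d)) /\
  (* 2. Disp(Y) = A Disp(X) A^T *)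
  ((forall j, Ex_exists q (fun w => ((@Xof c d w) j)%:R)) ->
   (forall j k, Ex_exists q (fun w => ((@Xof c d w) j)%:R * ((@Xof c d w) k)%:R)) ->
     dispmx q (@Yof c d) = A *m dispmx q (@Xof c d) *m A^T) /\
  (* 3. Phi_Y(t) = Phi_X(A^T t) *)
  (forall t : 'cV[R]_c,
     Ex_exists q (fmgf_integrand (@Yof c d) t) ->
     Ex_exists q (fmgf_integrand (@Xof c d) (A^T *m t)) ->
     fmgf q (@Yof c d) t = fmgf q (@Xof c d) (A^T *m t)).
Proof.
move=> [p_ge0 _] A01 A_col_le1 q.
have A_ge0 i j : 0 <= A i j by case/andP: (A01 i j).
split; first exact: remark_mean.
split; first exact: remark_disp.
(* [Ex_Xof] needs no summability. *)
move=> t Y_summable _; exact: remark_fmgf.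
Qed.
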